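(* In $\mathrm{LK}(\mathcal T)$, for every context $\Gamma$, every positive literal $p$, every formula $B$ and every multiset of formulae $\Delta$, assume $\mathcal T(\Gamma^{lit},\overline p)$ holds. Then: (cut_1) if $\Gamma,p\vdash\Delta$ is derivable, then $\Gamma\vdash\Delta$ is derivable; (cut_2) if $\Gamma,p\vdash[B]$ is derivable, then $\Gamma\vdash[B]$ is derivable.
   Context: Work in first-order logic where every predicate symbol is classified as either positive or negative. A literal is an atom (a predicate symbol applied to a list of first-order terms) or the negation of an atom; literals carry the involutive negation $l \mapsto \overline{l}$. Let $\mathcal P$ be the set of literals that are either atoms with a positive predicate symbol or negations of atoms with a negative predicate symbol; elements of $\mathcal P$ are called positive literals. Formulae are: positive formulae $P ::= p \mid A \wedge^+ B \mid A \vee^+ B \mid \exists x A$ and negative formulae $N ::= \overline{p} \mid A \wedge^- B \mid A \vee^- B \mid \forall x A$, with $p \in \mathcal P$ and $A,B$ arbitrary formulae. Negation is extended to all formulae by $\overline{\overline p}=p$, $\overline{A\wedge^+B}=\overline A\vee^-\overline B$, $\overline{A\wedge^-B}=\overline A\vee^+\overline B$, $\overline{A\vee^+B}=\overline A\wedge^-\overline B$, $\overline{A\vee^-B}=\overline A\wedge^+\overline B$, $\overline{\exists xA}=\forall x\overline A$, $\overline{\forall xA}=\exists x\overline A$. $A\{x:=t\}$ denotes capture-avoiding substitution. A procedure $\mathcal T$ is a predicate $\mathcal T(S)$ on finite sets $S$ of literals (intuitively: the decision procedure returns UNSAT on the conjunction of $S$), assumed to satisfy: (Weakening) $\mathcal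 T(S)$ implies $\mathcal T(S\cup S')$; (Contraction) $\mathcal T(S,A,A)$ implies $\mathcal T(S,A)$; (Instantiation) $\mathcal T(S)$ implies $\mathcal T(S\{x:=t\})$; (Consistency) $\mathcal T(S,p)$ and $\mathcal T(S,\overline p)$ imply $\mathcal T(S)$. The calculus $\mathrm{LK}(\mathcal T)$ has focused sequents $\Gamma\vdash[A]$ and unfocused sequents $\Gamma\vdash\Delta$, where $\Gamma$ (a context) is a multiset of negative formulae and positive literals, $\Delta$ is a multiset of formulae, and $A$ is a formula. $\Gamma^{lit}$ denotes the sub-multiset of literals of $\Gamma$. Rules (premisses above conclusion written as ''from ... infer ...''): Synchronous: from $\Gamma\vdash[A]$ and $\Gamma\vdash[B]$ infer $\Gamma\vdash[A\wedge^+B]$; from $\Gamma\vdash[A_i]$ ($i\in\{1,2\}$) infer $\Gamma\vdash[A_1\vee^+A_2]$; from $\Gamma\vdash[A\{x:=t\}]$ infer $\Gamma\vdash[\exists xA]$; infer $\Gamma,p\vdash[p]$ for $p$ a positive literal (axiom); if $\mathcal T(\Gamma^{lit},\overline p)$ holds, infer $\Gamma\vdash[p]$ for $p$ a positive literal; from $\Gamma\vdash N$ infer $\Gamma\vdash[N]$ for $N$ negative. Asynchronous: from $\Gamma\vdash A,\Delta$ and $\Gamma\vdash B,\Delta$ infer $\Gamma\vdash A\wedge^-B,\Delta$; from $\Gamma\vdash A_1,A_2,\Delta$ infer $\Gamma\vdash A_1\vee^-A_2,\Delta$; from $\Gamma\vdash A,\Delta$ infer $\Gamma\vdash\forall xA,\Delta$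 provided $x$ is not free in $\Gamma,\Delta$; from $\Gamma,\overline A\vdash\Delta$ infer $\Gamma\vdash A,\Delta$ provided $A$ is positive or a literal. Structural: from $\Gamma,\overline P\vdash[P]$ infer $\Gamma,\overline P\vdash$ (empty right-hand side) for $P$ positive; if $\mathcal T(\Gamma^{lit})$ holds, infer $\Gamma\vdash$ (empty right-hand side). *)

From Stdlib Require Import List Arith Permutation.
Import ListNotations.
Set Implicit Arguments.

Inductive term (Fsym : Type) : Type :=
| Var : nat -> term Fsym
| Fn : Fsym -> list (term Fsym) -> term Fsym.
Arguments Var {Fsym} _.

Fixpoint tsubst (Fsym : Type) (s : nat -> term Fsym) (t : term Fsym) : term Fsym :=
  match t with
  | Var n => s n
  | Fn f l => Fn f (map (tsubst s) l)
  end.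

Fixpoint tfv (Fsym : Type) (t : term Fsym) : list nat :=
  match t with
  | Var n => [n]
  | Fn _ l => flat_map (@tfv Fsym) l
  end.

(* ---------- Literals: a sign (true = atom, false = negated atom),
   a predicate symbol and a list of argument terms ---------- *)
Record literal (Fsym Psym : Type) : Type := Literal {
  lsign : bool; lpred : Psym; largs : list (term Fsym) }.

Definition neg_lit (Fsym Psym : Type) (l : literal Fsym Psym) : literal Fsym Psym :=
  Literal (negb (lsign l)) (lpred l) (largs l).

(* pol P = true : P is a positive predicate symbol; false : negative.
   A literal is positive iff it is an atom with a positive symbol or the
   negation of an atom with a negative symbol. *)
Definition positive_lit (Fsym Psym : Type) (pol : Psym -> bool)
  (l : literal Fsym Psym) : Prop := lsign l = pol (lpred l).

Definition lsubst (Fsym Psym : Type) (s : nat -> term Fsym) (l : literal Fsym Psym) :=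
  Literal (lsign l) (lpred l) (map (tsubst s) (largs l)).

Definition subst1 (Fsym : Type) (x : nat) (t : term Fsym) : nat -> term Fsym :=
  fun w => if Nat.eqb w x then t else Var w.

Inductive formula (Fsym Psym : Type) : Type :=
| Lit : literal Fsym Psym -> formula Fsym Psym
| AndP : formula Fsym Psym -> formula Fsym Psym -> formula Fsym Psym
| OrP  : formula Fsym Psym -> formula Fsym Psym -> formula Fsym Psym
| AndN : formula Fsym Psym -> formula Fsym Psym -> formula Fsym Psym
| OrN  : formula Fsym Psym -> formula Fsym Psym -> formula Fsym Psym
| Ex   : nat -> formula Fsym Psym -> formula Fsym Psym
| All  : nat -> formula Fsym Psym -> formula Fsym Psym.

Fixpoint neg (Fsym Psym : Type) (A : formula Fsym Psym) : formula Fsym Psym :=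
  match A with
  | Lit l => Lit (neg_lit l)
  | AndP A B => OrN (neg A) (neg B)
  | AndN A B => OrP (neg A) (neg B)
  | OrP A B => AndN (neg A) (neg B)
  | OrN A B => AndP (neg A) (neg B)
  | Ex x A => All x (neg A)
  | All x A => Ex x (neg A)
  end.

Definition is_positive (Fsym Psym : Type) (pol : Psym -> bool)
  (A : formula Fsym Psym) : Prop :=
  match A with
  | Lit l => positive_lit pol l
  | AndP _ _ | OrP _ _ | Ex _ _ => True
  | _ => False
  end.

Definition is_negative (Fsym Psym : Type) (pol : Psym -> bool)
  (A : formula Fsym Psym) : Prop :=
  match A with
  | Lit l => ~ positive_lit pol l
  | AndN _ _ | OrN _ _ | All _ _ => True
  | _ => False
  end.

Definition is_lit (Fsym Psym : Type) (A : formula Fsym Psym) : Prop :=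
  match A with Lit _ => True | _ => False end.

Fixpoint fv (Fsym Psym : Type) (A : formula Fsym Psym) : list nat :=
  match A with
  | Lit l => flat_map (@tfv Fsym) (largs l)
  | AndP A B | OrP A B | AndN A B | OrN A B => fv A ++ fv B
  | Ex x A | All x A => filter (fun w => negb (Nat.eqb w x)) (fv A)
  end.

Definition fresh (l : list nat) : nat := S (list_max l).

Fixpoint fsubst (Fsym Psym : Type) (s : nat -> term Fsym) (A : formula Fsym Psym)
  : formula Fsym Psym :=
  match A with
  | Lit l => Lit (lsubst s l)
  | AndP A B => AndP (fsubst s A) (fsubst s B)
  | OrP A B => OrP (fsubst s A) (fsubst s B)
  | AndN A B => AndN (fsubst s A) (fsubst s B)
  | OrN A B => OrN (fsubst s A) (fsubst s B)
  | Ex y A =>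
      let z := fresh (flat_map (fun w => tfv (s w))
                        (filter (fun w => negb (Nat.eqb w y)) (fv A))) in
      Ex z (fsubst (fun w => if Nat.eqb w y then Var z else s w) A)
  | All y A =>
      let z := fresh (flat_map (fun w => tfv (s w))
                        (filter (fun w => negb (Nat.eqb w y)) (fv A))) in
      All z (fsubst (fun w => if Nat.eqb w y then Var z else s w) A)
  end.

Definition inst (Fsym Psym : Type) (A : formula Fsym Psym) (x : nat) (t : term Fsym) :=
  fsubst (subst1 x t) A.

Definition lits (Fsym Psym : Type) (G : list (formula Fsym Psym)) : list (literal Fsym Psym) :=
  flat_map (fun A => match A with Lit l => [l] | _ => [] end) G.

Definition is_context (Fsym Psym : Type) (pol : Psym -> bool)
  (G : list (formula Fsym Psym)) : Prop :=
  Forall (fun A => is_negative pol A \/ (exists l, A = Lit l /\ positive_lit pol l)) G.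

(* ---------- Procedures: predicates on finite sets of literals, represented
   as lists, invariant under permutation ---------- *)
Definition procedure (Fsym Psym : Type) (T : list (literal Fsym Psym) -> Prop) : Prop :=
  (forall S S', Permutation S S' -> T S -> T S') /\
  (forall S S', T S -> T (S ++ S')) /\
  (forall S A, T (A :: A :: S) -> T (A :: S)) /\
  (forall S x t, T S -> T (map (lsubst (subst1 x t)) S)) /\
  (forall S p, T (p :: S) -> T (neg_lit p :: S) -> T S).

Inductive sequent (Fsym Psym : Type) : Type :=
| Foc : list (formula Fsym Psym) -> formula Fsym Psym -> sequent Fsym Psym
| Unf : list (formula Fsym Psym) -> list (formula Fsym Psym) -> sequent Fsym Psym.

(* Contexts and right-hand sides are multisets: represented as lists, with the
   principal formula located by membership (contexts) or permutation (rhs). *)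
Inductive LK (Fsym Psym : Type) (pol : Psym -> bool)
  (T : list (literal Fsym Psym) -> Prop) : sequent Fsym Psym -> Prop :=
| LK_andP G A B :
    LK pol T (Foc G A) -> LK pol T (Foc G B) -> LK pol T (Foc G (AndP A B))
| LK_orP1 G A B : LK pol T (Foc G A) -> LK pol T (Foc G (OrP A B))
| LK_orP2 G A B : LK pol T (Foc G B) -> LK pol T (Foc G (OrP A B))
| LK_ex G x A t : LK pol T (Foc G (inst A x t)) -> LK pol T (Foc G (Ex x A))
| LK_ax G p : positive_lit pol p -> In (Lit p) G -> LK pol T (Foc G (Lit p))
| LK_Tfoc G p : positive_lit pol p -> T (lits G ++ [neg_lit p]) -> LK pol T (Foc G (Lit p))
| LK_release G N : is_negative pol N -> LK pol T (Unf G [N]) -> LK pol T (Foc G N)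
| LK_andN G D D' A B : Permutation D (AndN A B :: D') ->
    LK pol T (Unf G (A :: D')) -> LK pol T (Unf G (B :: D')) -> LK pol T (Unf G D)
| LK_orN G D D' A B : Permutation D (OrN A B :: D') ->
    LK pol T (Unf G (A :: B :: D')) -> LK pol T (Unf G D)
| LK_all G D D' x A : Permutation D (All x A :: D') ->
    (forall C, In C (G ++ D') -> ~ In x (fv C)) ->
    LK pol T (Unf G (A :: D')) -> LK pol T (Unf G D)
| LK_store G D D' A : Permutation D (A :: D') -> (is_positive pol A \/ is_lit A) ->
    LK pol T (Unf (neg A :: G) D') -> LK pol T (Unf G D)
| LK_focus G P : is_positive pol P -> In (neg P) G ->
    LK pol T (Foc G P) -> LK pol T (Unf G [])
| LK_Tclose G : T (lits G) -> LK pol T (Unf G []).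

From Stdlib Require Import List Permutation.
Import ListNotations.

(* Idea: erase every occurrence-position of the stored literal p from the
   context of a derivation, by induction on the derivation.  Only three rules
   look at the context:
   - the axiom Γ,p ⊢ [p] on p itself becomes the T-rule, since T(Γ^lit, ¬p);
   - the T-rules (focused and closing) need T(Γ^lit, p, ...) turned into
     T(Γ^lit, ...), which is Consistency (cut on literals inside T) together
     with Weakening of the side condition T(Γ^lit, ¬p);
   - focusing on a stored ¬P can never pick p, because ¬P is then a negative
     literal while p is positive.
   The asynchronous store rule extends the context on the left, so the
   induction is stated for p at an arbitrary position K1 ++ p :: K2, and the
   side condition is carried along by Weakening. *)

Section LiteralCut.
Variables (Fsym Psym : Type) (pol : Psym -> bool)
  (T : list (literal Fsym Psym) -> Prop) (HT : procedure T).

Notation formula := (formula Fsym Psym).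
Notation literal := (literal Fsym Psym).

Lemma T_perm {S S' : list literal} : Permutation S S' -> T S -> T S'.
Proof. destruct HT as [h _]. apply h. Qed.

Lemma T_weaken_left {S : list literal} (S' : list literal) : T S -> T (S' ++ S).
Proof.
  intro h. destruct HT as [_ [hw _]].
  apply (T_perm (Permutation_app_comm S S')), hw, h.
Qed.

(* Cut on a literal at the level of the procedure: from T(L,¬q) and
   T(q,L,X) infer T(L,X); this is Consistency plus Weakening. *)
Lemma T_cut {q : literal} {L X : list literal} :
  T (L ++ [neg_lit q]) -> T (q :: L ++ X) -> T (L ++ X).
Proof.
  intros hneg hpos. destruct HT as [_ [hw [_ [_ hcons]]]].
  apply (hcons _ q hpos).
  apply (@T_perm (L ++ [neg_lit q] ++ X)).
  - apply Permutation_sym, Permutation_middle.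
  - rewrite app_assoc. apply hw, hneg.
Qed.

Lemma lits_app (L1 L2 : list formula) : lits (L1 ++ L2) = lits L1 ++ lits L2.
Proof. apply flat_map_app. Qed.

Lemma lits_middle (q : literal) (K1 K2 : list formula) :
  Permutation (lits (K1 ++ Lit q :: K2)) (q :: lits (K1 ++ K2)).
Proof.
  rewrite !lits_app. apply Permutation_sym, Permutation_middle.
Qed.

Lemma neg_lit_not_positive {q : literal} :
  positive_lit pol q -> ~ positive_lit pol (neg_lit q).
Proof.
  unfold positive_lit. simpl. intros hq hn.
  rewrite <- hq in hn. destruct (lsign q); discriminate.
Qed.

Variables (p : literal) (Hp : positive_lit pol p).

Lemma side_condition_weaken {A : formula} {K : list formula} :
  T (lits K ++ [neg_lit p]) -> T (lits (A :: K) ++ [neg_lit p]).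
Proof.
  intro h. change (A :: K) with ([A] ++ K).
  rewrite lits_app, <- app_assoc. apply T_weaken_left, h.
Qed.

Lemma T_erase {K1 K2 : list formula} {X : list literal} :
  T (lits (K1 ++ K2) ++ [neg_lit p]) ->
  T (lits (K1 ++ Lit p :: K2) ++ X) -> T (lits (K1 ++ K2) ++ X).
Proof.
  intros hneg hpos. apply (T_cut hneg).
  apply (T_perm (Permutation_app_tail X (lits_middle p K1 K2)) hpos).
Qed.

Lemma focus_not_on_p {P : formula} : is_positive pol P -> neg P <> Lit p.
Proof.
  destruct P; simpl; try discriminate. intros hP heq.
  injection heq as <-. exact (neg_lit_not_positive hP Hp).
Qed.

Lemma in_insert {C : formula} {K1 K2 : list formula} :
  In C (K1 ++ K2) -> In C (K1 ++ Lit p :: K2).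
Proof. rewrite !in_app_iff. simpl. tauto. Qed.

Lemma in_remove {C : formula} {K1 K2 : list formula} :
  In C (K1 ++ Lit p :: K2) -> C = Lit p \/ In C (K1 ++ K2).
Proof. rewrite !in_app_iff. simpl. intros [h | [h | h]]; auto. Qed.

Definition context_of (S : sequent Fsym Psym) : list formula :=
  match S with Foc G _ => G | Unf G _ => G end.

Definition with_context (G : list formula) (S : sequent Fsym Psym) :=
  match S with Foc _ B => Foc G B | Unf _ D => Unf G D end.

Lemma erase_literal (S : sequent Fsym Psym) : LK pol T S ->
  forall K1 K2, context_of S = K1 ++ Lit p :: K2 ->
  T (lits (K1 ++ K2) ++ [neg_lit p]) -> LK pol T (with_context (K1 ++ K2) S).
Proof.
  induction 1 as [ | | | | G q hq hin | G q hq hT | | | | G D D' x A hperm hfresh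
                 | G D D' A hperm hA _ IH | G P hP hin _ IH | G hT ];
    simpl in *; intros K1 K2 heq hside; subst G.
  - apply LK_andP; auto.
  - apply LK_orP1; auto.
  - apply LK_orP2; auto.
  - eapply LK_ex; auto.
  - destruct (in_remove hin) as [hp_eq | hin'].
    + injection hp_eq as ->. apply LK_Tfoc; assumption.
    + apply LK_ax; assumption.
  - apply LK_Tfoc; [assumption | exact (T_erase hside hT)].
  - apply LK_release; auto.
  - eapply LK_andN; eauto.
  - eapply LK_orN; eauto.
  - eapply LK_all; [eassumption | | auto].
    intros C hC. apply hfresh. rewrite <- app_assoc in *. apply in_insert, hC.
  - eapply LK_store; [eassumption | eassumption |].
    apply (IH (neg A :: K1) K2); [reflexivity | apply side_condition_weaken, hside].
  - destruct (in_remove hin) as [hp_eq | hin'].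
    + destruct (focus_not_on_p hP hp_eq).
    + eapply LK_focus; eauto.
  - apply LK_Tclose. rewrite <- (app_nil_r (lits (K1 ++ K2))).
    apply T_erase; [assumption | rewrite app_nil_r; exact hT].
Qed.

End LiteralCut.

Theorem mainTheorem4 (Fsym Psym : Type) (pol : Psym -> bool)
  (T : list (literal Fsym Psym) -> Prop) (HT : procedure T)
  (G : list (formula Fsym Psym)) (p : literal Fsym Psym)
  (B : formula Fsym Psym) (D : list (formula Fsym Psym)) :
  is_context pol G -> positive_lit pol p ->
  T (lits G ++ [neg_lit p]) ->
  (LK pol T (Unf (Lit p :: G) D) -> LK pol T (Unf G D)) /\
  (LK pol T (Foc (Lit p :: G) B) -> LK pol T (Foc G B)).
Proof.
  intros _ hp hside.
  split; intro hder;
    exact (erase_literal _ _ _ _ HT p hp _ hder [] G eq_refl hside).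
Qed.
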